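(* Let $X$ be a complex Banach space with a closed linear subspace $M$, and let $u_1,\dots,u_n\in X$ with $\|u_k\|=1$. Set $V_0:=\{0\}$ and $V_k:=\operatorname{Span}\{u_1,\dots,u_k\}$ for $k=1,\dots,n$. Let $\delta_1,\dots,\delta_n$ be positive numbers with $\operatorname{dist}(u_k,M+V_{k-1})\ge\delta_k$ for $k=1,\dots,n$, and set $\Delta_k:=\frac{\prod_{i=k}^n\delta_i}{\prod_{i=k+1}^n(1+\delta_i)}$ for $k=1,\dots,n$. Then $\delta_k\le1$ and $\dim(M+V_k)/M=k$ for all $k$, and $$\operatorname{dist}\Big(\sum_{k=1}^n a_ku_k,M\Big)\ge\frac{\Delta_1}{n}\sum_{k=1}^n|a_k|\quad\text{for all }a_1,\dots,a_n\in\mathbb{C},\qquad \gamma(V_n,M)\ge\frac{\Delta_1}{n}.$$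
   Context: For linear subspaces $A,B$, $\gamma(A,B):=\inf_{u\in A\setminus B}\frac{\operatorname{dist}(u,B)}{\operatorname{dist}(u,A\cap B)}$ if $A\not\subset B$, and $\gamma(A,B):=1$ if $A\subset B$. *)

From HB Require Import structures.
From mathcomp Require Import all_boot all_order all_algebra.
From mathcomp Require Import all_classical all_reals all_analysis.
From mathcomp Require Import complex.
Import Order.TTheory GRing.Theory Num.Theory.
Import numFieldNormedType.Exports.
Set Implicit Arguments. Unset Strict Implicit. Unset Printing Implicit Defensive.
Local Open Scope classical_set_scope.
Local Open Scope ring_scope.

Section Defs.
Variable R : realType.
Variable X : normedModType R[i].

(* real part of a (necessarily real, nonnegative) norm value in R[i] *)
Definition rnorm (x : X) : R := complex.Re `|x|.

Definition dist (x : X) (A : set X) : R := inf [set rnorm (x - a) | a in A].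

Definition lin_subspace (A : set X) : Prop :=
  A 0 /\ (forall x y, A x -> A y -> A (x + y)) /\
  (forall (c : R[i]) x, A x -> A (c *: x)).

Definition setsum (A B : set X) : set X :=
  [set x | exists a b, A a /\ B b /\ x = a + b].

Definition Vspan (u : nat -> X) (k : nat) : set X :=
  [set x | exists c : nat -> R[i], x = \sum_(1 <= i < k.+1) c i *: u i].

(* dim (B / A) = k : there are k vectors in B whose cosets mod A form a
   basis of the quotient B / A (used with A a subspace contained in B) *)
Definition quot_dim_is (B A : set X) (k : nat) : Prop :=
  exists w : 'I_k -> X,
    (forall i, B (w i)) /\
    (forall c : 'I_k -> R[i], A (\sum_(i < k) c i *: w i) -> forall i, c i = 0) /\
    (forall b, B b -> exists c : 'I_k -> R[i], A (b - \sum_(i < k) c i *: w i)).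

Definition gap (A B : set X) : R :=
  if `[< A `<=` B >] then 1
  else inf [set dist u B / dist u (A `&` B) | u in A `\` B].

End Defs.

Definition Delta (R : realType) (delta : nat -> R) (n k : nat) : R :=
  (\prod_(k <= i < n.+1) delta i) / (\prod_(k.+1 <= i < n.+1) (1 + delta i)).

Definition cnorm (R : realType) (c : R[i]) : R := complex.Re `|c|.

(* If c_k <> 0, then sum_(i <= k) c_i u_i - m = c_k (u_k - w) with w in M + V_(k-1),
   so |c_k| delta_k <= ||sum_(i <= k) c_i u_i - m|| for every m in M; with m the
   combination itself, this makes u_1, ..., u_n independent modulo M.  For
   x = sum_i a_i u_i it gives |a_k| delta_k <= e + sum_(i > k) |a_i| with e = ||x - m||,
   and a backward induction on the invariant
   (e + sum_(i >= k) |a_i|) prod_(i >= k) delta_i <= e prod_(i >= k) (1 + delta_i)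
   yields |a_k| Delta_k <= e.  As Delta_k = delta_k / (1 + delta_(k+1)) Delta_(k+1) and
   delta_k <= 1, Delta_1 <= Delta_k, and summing over k gives the distance bound; the
   bound on gamma follows since V_n meets M only in 0. *)

From HB Require Import structures.
From mathcomp Require Import all_boot all_order all_algebra.
From mathcomp Require Import all_classical all_reals all_analysis.
From mathcomp Require Import complex.
From mathcomp Require Import zify ring.
Import Order.TTheory GRing.Theory Num.Theory.
Import numFieldNormedType.Exports.

Set Implicit Arguments.
Unset Strict Implicit.
Local Open Scope classical_set_scope.
Local Open Scope complex_scope.
Local Open Scope ring_scope.

Section NormDistance.
Variable R : realType.

Lemma Re_normrK (V : normedZmodType R[i]) (v : V) : (complex.Re `|v|)%:C = `|v|.
Proof. by rewrite RRe_real // normr_real. Qed.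

Lemma Re_normr_ge0 (V : normedZmodType R[i]) (v : V) : 0 <= complex.Re `|v|.
Proof. by have := normr_ge0 v; rewrite lecE => /andP[]. Qed.

Lemma Re_normr_eq0 (V : normedZmodType R[i]) (v : V) :
  (complex.Re `|v| == 0) = (v == 0).
Proof. by rewrite -[v == 0]normr_eq0 -[`|v|]Re_normrK fmorph_eq0. Qed.

Variable X : normedModType R[i].
Implicit Types (x y : X) (c : R[i]) (A : set X).

Lemma rnormD x y : rnorm (x + y) <= rnorm x + rnorm y.
Proof.
have := ler_normD x y.
by rewrite -[`|x + y|]Re_normrK -[`|x|]Re_normrK -[`|y|]Re_normrK -rmorphD lecR.
Qed.

Lemma rnormB x y : rnorm (x - y) <= rnorm x + rnorm y.
Proof.
have := ler_normB x y.
by rewrite -[`|x - y|]Re_normrK -[`|x|]Re_normrK -[`|y|]Re_normrK -rmorphD lecR.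
Qed.

Lemma rnormZ c x : rnorm (c *: x) = cnorm c * rnorm x.
Proof. by rewrite /rnorm normrZ -[`|c|]Re_normrK -[`|x|]Re_normrK -rmorphM. Qed.

Lemma rnorm_gt0 x : (0 < rnorm x) = (x != 0).
Proof. by rewrite lt_def Re_normr_eq0 Re_normr_ge0 andbT. Qed.

Lemma rnorm_sum (I : Type) (r : seq I) (P : pred I) (F : I -> X) :
  rnorm (\sum_(i <- r | P i) F i) <= \sum_(i <- r | P i) rnorm (F i).
Proof.
elim/big_ind2: _ => [|x1 y1 x2 y2 le1 le2|//]; first by rewrite /rnorm normr0.
exact: le_trans (rnormD _ _) (lerD le1 le2).
Qed.

Lemma dist_le_rnorm x A a : A a -> dist x A <= rnorm (x - a).
Proof.
move=> Aa; apply: ge_inf; last by exists a.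
by exists 0 => _ [b _ <-]; exact: Re_normr_ge0.
Qed.

Lemma lb_le_dist x A r : A !=set0 ->
  (forall a, A a -> r <= rnorm (x - a)) -> r <= dist x A.
Proof.
move=> [a Aa] lbr; apply: lb_le_inf; first by exists (rnorm (x - a)), a.
by move=> _ [b Ab <-]; exact: lbr.
Qed.

Lemma dist_trivial x A : A 0 -> (forall a, A a -> a = 0) -> dist x A = rnorm x.
Proof.
move=> A0 A_0; apply/le_anti/andP; split.
  by rewrite -[x in rnorm x]subr0 dist_le_rnorm.
by apply: lb_le_dist => [|a /A_0 ->]; [exists 0 | rewrite subr0].
Qed.

Lemma gap_ge A B r : r <= 1 ->
  (forall v, (A `\` B) v -> 0 < dist v (A `&` B)) ->
  (forall v, (A `\` B) v -> r * dist v (A `&` B) <= dist v B) ->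
  r <= gap A B.
Proof.
move=> r_le1 dist_gt0 dist_ge; rewrite /gap; case: ifPn => // /asboolPn AnotB.
apply: lb_le_inf => [|_ [v ABv <-]]; last by rewrite ler_pdivlMr ?dist_gt0 ?dist_ge.
have [v ABv] : (A `\` B) !=set0 by apply/set0P/eqP; rewrite setD_eq0.
by exists (dist v B / dist v (A `&` B)), v.
Qed.

End NormDistance.

Section Delta.
Variables (R : realType) (delta : nat -> R) (n : nat).

Lemma prod_gt0_on (F : nat -> R) k : (0 < k)%N ->
  (forall i, (1 <= i <= n)%N -> 0 < F i) -> 0 < \prod_(k <= i < n.+1) F i.
Proof.
move=> k0 F_gt0; rewrite big_nat_cond; apply: prodr_gt0 => i /andP[/andP[ki iN] _].
by apply: F_gt0; lia.
Qed.

Lemma Delta_succ k : (k < n)%N ->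
  Delta delta n k = delta k / (1 + delta k.+1) * Delta delta n k.+1.
Proof.
move=> kn; rewrite /Delta [\prod_(k <= i < n.+1) _]big_ltn 1?ltnW //.
by rewrite [\prod_(k.+1 <= i < n.+1) (1 + _)]big_ltn // invfM mulrACA.
Qed.

Lemma Delta_nn : Delta delta n n = delta n.
Proof. by rewrite /Delta big_nat1 big_geq // divr1. Qed.

Hypothesis delta_gt0 : forall k, (1 <= k <= n)%N -> 0 < delta k.

Let prod_1Ddelta_gt0 k : (0 < k)%N -> 0 < \prod_(k <= i < n.+1) (1 + delta i).
Proof. by move=> k0; apply: (prod_gt0_on k0) => i /delta_gt0 /(addr_gt0 ltr01). Qed.

Lemma Delta_ge0 k : (0 < k)%N -> 0 <= Delta delta n k.
Proof.
move=> k0; rewrite divr_ge0 // ltW ?prod_1Ddelta_gt0 //.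
exact: prod_gt0_on.
Qed.

Section TailBound.
Variables (e : R) (s : nat -> R).
Hypothesis coef_le : forall k, (1 <= k <= n)%N ->
  s k * delta k <= e + \sum_(k.+1 <= i < n.+1) s i.

Lemma tail_sum_prod_le k : (0 < k)%N ->
  (e + \sum_(k <= i < n.+1) s i) * \prod_(k <= i < n.+1) delta i
    <= e * \prod_(k <= i < n.+1) (1 + delta i).
Proof.
move=> k0; move: {2}(n.+1 - k)%N (leqnn (n.+1 - k)) => j.
elim: j k k0 => [|j IH] k k0 jk.
  by rewrite !big_geq ?addr0 ?mulr1 //; lia.
have [nk|kn] := leqP n.+1 k; first by rewrite !big_geq ?addr0 ?mulr1.
rewrite !(big_ltn kn).
set S := \sum_(k.+1 <= i < n.+1) s i.
set P := \prod_(k.+1 <= i < n.+1) delta i.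
have IHk : (e + S) * P <= e * \prod_(k.+1 <= i < n.+1) (1 + delta i).
  by apply: IH => //; lia.
have sk_le : s k * delta k <= e + S by apply: coef_le; lia.
have dk_gt0 : 0 < delta k by apply: delta_gt0; lia.
have P_ge0 : 0 <= P by rewrite ltW // prod_gt0_on.
apply: (@le_trans _ _ ((1 + delta k) * ((e + S) * P))).
  rewrite !mulrA ler_wpM2r //.
  have -> : (1 + delta k) * (e + S) = (e + S) + (e + S) * delta k by ring.
  have -> : (e + (s k + S)) * delta k = s k * delta k + (e + S) * delta k by ring.
  by rewrite lerD2r.
by rewrite [leRHS]mulrCA ler_wpM2l // addr_ge0 // ltW.
Qed.

Lemma coef_Delta_le k : (1 <= k <= n)%N -> s k * Delta delta n k <= e.
Proof.
move=> /andP[k1 kn]; rewrite /Delta big_ltn // !mulrA.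
rewrite ler_pdivrMr ?prod_1Ddelta_gt0 //.
apply: (le_trans _ (tail_sum_prod_le (k := k.+1) isT)).
by rewrite ler_wpM2r ?coef_le ?k1 // ltW // prod_gt0_on.
Qed.

End TailBound.

Hypothesis delta_le1 : forall k, (1 <= k <= n)%N -> delta k <= 1.

Lemma Delta1_le k : (1 <= k <= n)%N -> Delta delta n 1 <= Delta delta n k.
Proof.
elim: k => [//|k IH] /andP[_ kn]; have [->//|k0] := posnP k.
apply: le_trans (IH _) _; first by rewrite k0 ltnW.
rewrite Delta_succ // ler_piMl ?Delta_ge0 // ler_pdivrMr ?mul1r; last first.
  by rewrite addr_gt0 ?delta_gt0.
have dk_le1 : delta k <= 1 by rewrite delta_le1 // k0 ltnW.
have dk1_gt0 : 0 < delta k.+1 by rewrite delta_gt0.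
by rewrite (le_trans dk_le1) // lerDl ltW.
Qed.

Lemma Delta_mean_le (e : R) (s : nat -> R) :
  (forall k, (1 <= k <= n)%N -> s k * delta k <= e + \sum_(k.+1 <= i < n.+1) s i) ->
  (forall k, (1 <= k <= n)%N -> 0 <= s k) -> 0 <= e ->
  Delta delta n 1 / n%:R * \sum_(1 <= k < n.+1) s k <= e.
Proof.
move=> coef_le s_ge0 e_ge0; have [->|n0] := posnP n; first by rewrite invr0 mulr0 mul0r.
rewrite mulrAC ler_pdivrMr ?ltr0n // mulr_sumr.
have sum_le : \sum_(1 <= k < n.+1) Delta delta n 1 * s k <= \sum_(1 <= k < n.+1) e.
  apply: ler_sum_nat => k kn; rewrite mulrC.
  exact: le_trans (ler_wpM2l (s_ge0 k kn) (Delta1_le kn)) (coef_Delta_le coef_le kn).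
by apply: le_trans sum_le _; rewrite sumr_const_nat subn1 mulr_natr.
Qed.

End Delta.

Section Subspace.
Variables (R : realType) (X : normedModType R[i]) (M : set X) (u : nat -> X).
Hypothesis M_subspace : lin_subspace M.

Let M0 : M 0 := M_subspace.1.
Let MZ c x : M x -> M (c *: x) := M_subspace.2.2 c x.

Lemma Vspan0 k : Vspan u k 0.
Proof. by exists (fun=> 0); rewrite big1 // => i _; rewrite scale0r. Qed.

Lemma VspanZ k c v : Vspan u k v -> Vspan u k (c *: v).
Proof.
case=> a ->; exists (fun i => c * a i).
by rewrite scaler_sumr; apply: eq_bigr => i _; rewrite scalerA.
Qed.

Lemma Vspan_gen k i : (1 <= i <= k)%N -> Vspan u k (u i).
Proof.
move=> ik; exists (fun j => (j == i)%:R).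
rewrite (bigD1_seq i) ?mem_iota ?iota_uniq //=; last by lia.
by rewrite eqxx scale1r big1 ?addr0 // => j /negPf ->; rewrite scale0r.
Qed.

Lemma last_coef_dist_le k (c : nat -> R[i]) m : (0 < k)%N -> M m ->
  cnorm (c k) * dist (u k) (setsum M (Vspan u k.-1))
    <= rnorm (\sum_(1 <= i < k.+1) c i *: u i - m).
Proof.
move=> k0 Mm; have [->|ck0] := eqVneq (c k) 0.
  by rewrite /cnorm normr0 mul0r Re_normr_ge0.
set S := \sum_(1 <= i < k) c i *: u i.
set w := (c k)^-1 *: (m - S).
have Mw : setsum M (Vspan u k.-1) w.
  exists ((c k)^-1 *: m), (- (c k)^-1 *: S); split; first exact: MZ.
  split; last by rewrite /w scaleNr scalerBr.
  by apply: VspanZ; exists c; rewrite prednK.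
have -> : \sum_(1 <= i < k.+1) c i *: u i - m = c k *: (u k - w).
  by rewrite big_nat_recr //= /w scalerBr scalerA divff // scale1r opprB addrAC addrC.
by rewrite rnormZ ler_wpM2l ?Re_normr_ge0 ?dist_le_rnorm.
Qed.

Lemma coef_eq0_of_memM k (c : nat -> R[i]) :
  (forall j, (1 <= j <= k)%N -> 0 < dist (u j) (setsum M (Vspan u j.-1))) ->
  M (\sum_(1 <= i < k.+1) c i *: u i) -> forall j, (1 <= j <= k)%N -> c j = 0.
Proof.
elim: k c => [|k IH] c dist_gt0 Msum j jk; first by lia.
have ck : c k.+1 = 0.
  have := last_coef_dist_le (k := k.+1) c isT Msum.
  rewrite subrr /rnorm normr0 pmulr_lle0 ?dist_gt0 ?leqnn // => ck_le0.
  by apply/eqP; rewrite -Re_normr_eq0 eq_le ck_le0 Re_normr_ge0.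
move: Msum; rewrite big_nat_recr //= ck scale0r addr0 => Msum.
have [->//|jk1] := eqVneq j k.+1.
apply: (IH c _ Msum j); first by move=> i ik; apply: dist_gt0; lia.
by lia.
Qed.

Lemma quot_dim_Vspan k :
  (forall j, (1 <= j <= k)%N -> 0 < dist (u j) (setsum M (Vspan u j.-1))) ->
  quot_dim_is (setsum M (Vspan u k)) M k.
Proof.
move=> dist_gt0; exists (fun i : 'I_k => u i.+1); split; [|split].
- move=> i; exists 0, (u i.+1); rewrite add0r; do 2!split=> //.
  by apply: Vspan_gen; rewrite /= ltn_ord.
- move=> c Mc i.
  pose c' j := if (insub j.-1 : option 'I_k) is Some l then c l else 0.
  have := @coef_eq0_of_memM k c' dist_gt0 _ i.+1; rewrite /c' /= valK; apply.
    by rewrite big_add1 big_mkord; under eq_bigr do rewrite /= valK.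
  by rewrite /= ltn_ord.
- move=> b [m [v [Mm [[c ->] ->]]]]; exists (fun i : 'I_k => c i.+1).
  by rewrite big_add1 big_mkord addrK.
Qed.

End Subspace.

Section Estimates.
Variables (R : realType) (X : normedModType R[i]) (M : set X) (n : nat).
Variables (u : nat -> X) (delta : nat -> R).
Hypothesis M_subspace : lin_subspace M.
Hypothesis u_unit : forall k, (1 <= k <= n)%N -> `|u k| = 1.
Hypothesis delta_gt0 : forall k, (1 <= k <= n)%N -> 0 < delta k.
Hypothesis delta_le_dist : forall k, (1 <= k <= n)%N ->
  delta k <= dist (u k) (setsum M (Vspan u k.-1)).

Let M0 : M 0 := M_subspace.1.

Lemma delta_le1 k : (1 <= k <= n)%N -> delta k <= 1.
Proof.
move=> kn; apply: le_trans (delta_le_dist kn) _.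
have S0 : setsum M (Vspan u k.-1) 0.
  by exists 0, 0; rewrite addr0; do 2!split=> //; exact: Vspan0.
by apply: le_trans (dist_le_rnorm _ S0) _; rewrite subr0 /rnorm u_unit.
Qed.

Lemma dist_span_gt0 k : (1 <= k <= n)%N -> 0 < dist (u k) (setsum M (Vspan u k.-1)).
Proof. by move=> kn; apply: lt_le_trans (delta_gt0 kn) (delta_le_dist kn). Qed.

Lemma rnorm_comb_le m (a : nat -> R[i]) : (0 < m)%N ->
  rnorm (\sum_(m <= i < n.+1) a i *: u i) <= \sum_(m <= i < n.+1) cnorm (a i).
Proof.
move=> m0; apply: le_trans (rnorm_sum _ _ _) _; apply: ler_sum_nat => i mi.
by rewrite rnormZ /rnorm u_unit ?mulr1 //; lia.
Qed.

Lemma coef_le_tail (a : nat -> R[i]) m k : M m -> (1 <= k <= n)%N ->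
  cnorm (a k) * delta k
    <= rnorm (\sum_(1 <= i < n.+1) a i *: u i - m) + \sum_(k.+1 <= i < n.+1) cnorm (a i).
Proof.
move=> Mm kn; have /andP[k1 k_le_n] := kn.
apply: le_trans (ler_wpM2l (Re_normr_ge0 _) (delta_le_dist kn)) _.
apply: le_trans (last_coef_dist_le u M_subspace a k1 Mm) _.
have -> : \sum_(1 <= i < k.+1) a i *: u i - m =
    (\sum_(1 <= i < n.+1) a i *: u i - m) - \sum_(k.+1 <= i < n.+1) a i *: u i.
  by rewrite (@big_cat_nat _ _ _ k.+1 1 n.+1) //= addrAC addrK.
by apply: le_trans (rnormB _ _) _; rewrite lerD2l rnorm_comb_le.
Qed.

Lemma dist_comb_ge (a : nat -> R[i]) :
  Delta delta n 1 / n%:R * (\sum_(1 <= k < n.+1) cnorm (a k))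
    <= dist (\sum_(1 <= k < n.+1) a k *: u k) M.
Proof.
apply: lb_le_dist => [|m Mm]; first by exists 0.
by apply: (Delta_mean_le delta_gt0 delta_le1) => [k|k _|];
  [exact: coef_le_tail | exact: Re_normr_ge0 | exact: Re_normr_ge0].
Qed.

Lemma Delta_mean_le1 : Delta delta n 1 / n%:R <= 1.
Proof.
have [->|n0] := posnP n; first by rewrite invr0 mulr0 ler01.
have nn : (1 <= n <= n)%N by rewrite n0 leqnn.
apply: (@le_trans _ _ (Delta delta n n)); last by rewrite Delta_nn delta_le1.
apply: le_trans (Delta1_le delta_gt0 delta_le1 nn).
by rewrite ler_pdivrMr ?ltr0n // ler_peMr ?ler1n ?(Delta_ge0 delta_gt0).
Qed.

Lemma gap_Vspan_ge : Delta delta n 1 / n%:R <= gap (Vspan u n) M.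
Proof.
have Delta_mean_ge0 : 0 <= Delta delta n 1 / n%:R.
  by rewrite divr_ge0 ?(Delta_ge0 delta_gt0).
have VM0 : (Vspan u n `&` M) 0 by split; first exact: Vspan0.
have VM_trivial y : (Vspan u n `&` M) y -> y = 0.
  case=> [[c ->] Mc]; rewrite big_nat_cond big1 // => j /andP[jn _].
  by rewrite (coef_eq0_of_memM M_subspace dist_span_gt0 Mc jn) scale0r.
apply: gap_ge => [|v [_ nMv]|_ [[c ->] nMv]]; rewrite ?(dist_trivial _ VM0 VM_trivial).
- exact: Delta_mean_le1.
- by rewrite rnorm_gt0; apply: contraPneq nMv => ->.
- apply: le_trans (ler_wpM2l Delta_mean_ge0 (rnorm_comb_le (m := 1) c isT)) _.
  exact: dist_comb_ge.
Qed.

End Estimates.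

Theorem lemma2p8 (R : realType) (X : completeNormedModType R[i])
  (M : set X) (n : nat) (u : nat -> X) (delta : nat -> R) :
  closed M -> lin_subspace M ->
  (forall k, (1 <= k <= n)%N -> `|u k| = 1) ->
  (forall k, (1 <= k <= n)%N -> 0 < delta k) ->
  (forall k, (1 <= k <= n)%N ->
     delta k <= dist (u k) (setsum M (Vspan u k.-1))) ->
  (forall k, (1 <= k <= n)%N -> delta k <= 1) /\
  (forall k, (k <= n)%N -> quot_dim_is (setsum M (Vspan u k)) M k) /\
  (forall a : nat -> R[i],
     Delta delta n 1 / n%:R * (\sum_(1 <= k < n.+1) cnorm (a k))
       <= dist (\sum_(1 <= k < n.+1) a k *: u k) M) /\
  Delta delta n 1 / n%:R <= gap (Vspan u n) M.
Proof.
move=> _ M_subspace u_unit delta_gt0 delta_le_dist.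
split; first exact: delta_le1 M_subspace u_unit delta_le_dist.
split.
  move=> k kn; apply: (quot_dim_Vspan M_subspace) => j /andP[j1 jk].
  by apply: (dist_span_gt0 delta_gt0 delta_le_dist); rewrite j1 (leq_trans jk kn).
split; first exact: dist_comb_ge M_subspace u_unit delta_gt0 delta_le_dist.
exact: gap_Vspan_ge M_subspace u_unit delta_gt0 delta_le_dist.
Qed.
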